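(* Let $n_d\ge 1$, let $S_1,\dots,S_{n_d}>0$, $\overline{P_0}\ge 0$ and $\theta_0\in[0,\pi/2)$. For $S>0$ define $\mathcal{X}(S,\overline{P_0},\theta_0)=\{(P,Q)\in\mathbb{R}^2: 0\le P\le S\overline{P_0},\ Q^2\le S^2-P^2,\ |Q|\le\tan(\theta_0)P\}$. Then $$\bigoplus_{i=1}^{n_d}\mathcal{X}(S_i,\overline{P_0},\theta_0)=\mathcal{X}\Big(\sum_{i=1}^{n_d}S_i,\overline{P_0},\theta_0\Big).$$
   Context: $\oplus$ denotes the Minkowski sum $A\oplus B=\{a+b: a\in A, b\in B\}$. The set $\mathcal{X}(S,\overline{P},\theta)$ is the feasible real/reactive power set of a photovoltaic inverter with apparent power rating $S$, normalized available real power $\overline{P}$, and minimum power factor $\cos\theta$. *)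

From Stdlib Require Import Reals.
Open Scope R_scope.

Definition set2 := (R * R)%type -> Prop.

Definition Xset (S Pbar theta : R) : set2 :=
  fun z => let (P, Q) := z in
    0 <= P /\ P <= S * Pbar /\ Q ^ 2 <= S ^ 2 - P ^ 2 /\ Rabs Q <= tan theta * P.

Definition msum (A B : set2) : set2 :=
  fun z => exists a b, A a /\ B b /\ z = (fst a + fst b, snd a + snd b).

Fixpoint bigmsum (n : nat) (F : nat -> set2) : set2 :=
  match n with
  | O => fun z => z = (0, 0)
  | S k => msum (bigmsum k F) (F k)
  end.

Fixpoint rsum (n : nat) (f : nat -> R) : R :=
  match n with
  | O => 0
  | S k => rsum k f + f k
  end.

(* Each feasible set is a dilate of one convex set: X(S) = S * X(1) for S >= 0.
   For a convex set K and a, b >= 0, every a x + b y with x, y in K equals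
   (a + b) times the convex combination (a x + b y) / (a + b) of x and y, so
   aK (+) bK = (a + b)K, and the corollary follows by induction on n_d. *)

From Stdlib Require Import Reals Lra Psatz.
Open Scope R_scope.

Definition padd (x y : R * R) : R * R := (fst x + fst y, snd x + snd y).

Definition pscale (c : R) (x : R * R) : R * R := (c * fst x, c * snd x).

Definition sscale (c : R) (A : set2) : set2 :=
  fun z => exists x, A x /\ z = pscale c x.

Definition convex (A : set2) : Prop :=
  forall x y t, A x -> A y -> 0 <= t <= 1 ->
    A (padd (pscale t x) (pscale (1 - t) y)).

Lemma msum_ext (A A' B B' : set2) :
  (forall z, A z <-> A' z) -> (forall z, B z <-> B' z) ->
  forall z, msum A B z <-> msum A' B' z.
Proof.
  intros HA HB z; split; intros (x & y & Hx & Hy & ->);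
    exists x, y; repeat split; firstorder.
Qed.

Lemma msum_sscale_convex (A : set2) (a b : R) :
  convex A -> 0 <= a -> 0 <= b ->
  forall z, msum (sscale a A) (sscale b A) z <-> sscale (a + b) A z.
Proof.
  intros HA Ha Hb z; split.
  - intros (u & v & (x & Hx & ->) & (y & Hy & ->) & ->).
    destruct (Rle_lt_or_eq_dec 0 (a + b)) as [Hab | Hab]; [lra | |].
    + exists (padd (pscale (a / (a + b)) x) (pscale (1 - a / (a + b)) y)).
      split.
      * assert (0 <= a / (a + b)) by (apply Rmult_le_pos; [| apply Rlt_le, Rinv_0_lt_compat]; lra).
        assert (0 <= b / (a + b)) by (apply Rmult_le_pos; [| apply Rlt_le, Rinv_0_lt_compat]; lra).
        assert (a / (a + b) + b / (a + b) = 1) by (field; lra).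
        apply HA; auto; lra.
      * unfold padd, pscale; cbn [fst snd]; f_equal; field; lra.
    + exists x; split; [exact Hx |].
      assert (a = 0) as -> by lra; assert (b = 0) as -> by lra.
      unfold padd, pscale; cbn [fst snd]; f_equal; ring.
  - intros (x & Hx & ->).
    exists (pscale a x), (pscale b x); repeat split; try (exists x; auto).
    unfold pscale; cbn [fst snd]; f_equal; ring.
Qed.

Lemma rsum_nonneg (n : nat) (f : nat -> R) :
  (forall i, (i < n)%nat -> 0 <= f i) -> 0 <= rsum n f.
Proof.
  induction n as [| n IH]; simpl; intros Hf; [lra |].
  assert (0 <= f n) by (apply Hf; lia).
  assert (0 <= rsum n f) by (apply IH; intros; apply Hf; lia).
  lra.
Qed.

Section FeasibleSet.

Variables Pb th : R.

Lemma Xset_scale (S c : R) (x : R * R) :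
  0 <= c -> Xset S Pb th x -> Xset (c * S) Pb th (pscale c x).
Proof.
  destruct x as [P Q]; unfold pscale; cbn [fst snd].
  intros Hc (HP0 & HPS & HQ & Htan); repeat split.
  - nra.
  - nra.
  - assert (c ^ 2 * Q ^ 2 <= c ^ 2 * (S ^ 2 - P ^ 2)) by (apply Rmult_le_compat_l; nra).
    nra.
  - rewrite Rabs_mult, (Rabs_pos_eq c) by exact Hc. nra.
Qed.

Lemma Xset_convex (S : R) : convex (Xset S Pb th).
Proof.
  intros [P1 Q1] [P2 Q2] t (HP1 & HPS1 & HQ1 & Htan1) (HP2 & HPS2 & HQ2 & Htan2) Ht.
  unfold padd, pscale; cbn [fst snd]; repeat split.
  - nra.
  - nra.
  - (* the squared norm is convex: the defect of Jensen's inequality is t (1 - t) |x - y|^2 *)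
    assert (t * (P1 ^ 2 + Q1 ^ 2) + (1 - t) * (P2 ^ 2 + Q2 ^ 2)
            - ((t * P1 + (1 - t) * P2) ^ 2 + (t * Q1 + (1 - t) * Q2) ^ 2)
            = t * (1 - t) * ((P1 - P2) ^ 2 + (Q1 - Q2) ^ 2)) by ring.
    assert (0 <= t * (1 - t) * ((P1 - P2) ^ 2 + (Q1 - Q2) ^ 2)).
    { apply Rmult_le_pos; [apply Rmult_le_pos; lra |].
      pose proof (pow2_ge_0 (P1 - P2)); pose proof (pow2_ge_0 (Q1 - Q2)); lra. }
    assert (t * (P1 ^ 2 + Q1 ^ 2) <= t * S ^ 2) by (apply Rmult_le_compat_l; lra).
    assert ((1 - t) * (P2 ^ 2 + Q2 ^ 2) <= (1 - t) * S ^ 2)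
      by (apply Rmult_le_compat_l; lra).
    lra.
  - eapply Rle_trans; [apply Rabs_triang |].
    rewrite !Rabs_mult, (Rabs_pos_eq t), (Rabs_pos_eq (1 - t)) by lra.
    nra.
Qed.

Lemma Xset_0 (z : R * R) : Xset 0 Pb th z <-> z = (0, 0).
Proof.
  destruct z as [P Q]; split.
  - intros (HP0 & HPS & HQ & _).
    assert (P = 0) as -> by lra; assert (Q = 0) as -> by nra; reflexivity.
  - intros [= -> ->]; repeat split; rewrite ?Rabs_R0; lra.
Qed.

(* Needed for X(0) = 0 * X(1): it puts the origin in X(1). *)
Hypothesis Pb_ge0 : 0 <= Pb.

Lemma Xset_sscale (S : R) :
  0 <= S -> forall z, Xset S Pb th z <-> sscale S (Xset 1 Pb th) z.
Proof.
  intros HS z; split.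
  - destruct (Rle_lt_or_eq_dec 0 S HS) as [HSpos | <-]; intros Hz.
    + exists (pscale (/ S) z); split.
      * rewrite <- (Rinv_l S) by lra.
        apply Xset_scale; [apply Rlt_le, Rinv_0_lt_compat |]; assumption.
      * destruct z; unfold pscale; cbn [fst snd]; f_equal; field; lra.
    + apply Xset_0 in Hz as ->.
      exists (0, 0); split.
      * repeat split; rewrite ?Rabs_R0; lra.
      * unfold pscale; cbn [fst snd]; f_equal; ring.
  - intros (x & Hx & ->).
    pose proof (Xset_scale 1 S x HS Hx) as HSx.
    rewrite Rmult_1_r in HSx; exact HSx.
Qed.

Lemma msum_Xset (a b : R) :
  0 <= a -> 0 <= b ->
  forall z, msum (Xset a Pb th) (Xset b Pb th) z <-> Xset (a + b) Pb th z.
Proof.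
  intros Ha Hb z.
  rewrite (msum_ext _ (sscale a (Xset 1 Pb th)) _ (sscale b (Xset 1 Pb th)))
    by (apply Xset_sscale; assumption).
  rewrite msum_sscale_convex by (apply Xset_convex || assumption).
  symmetry; apply Xset_sscale; lra.
Qed.

Lemma bigmsum_Xset (n : nat) (S : nat -> R) :
  (forall i, (i < n)%nat -> 0 <= S i) ->
  forall z, bigmsum n (fun i => Xset (S i) Pb th) z <-> Xset (rsum n S) Pb th z.
Proof.
  induction n as [| n IH]; simpl; intros HS z.
  - symmetry; apply Xset_0.
  - assert (HS' : forall i, (i < n)%nat -> 0 <= S i) by (intros; apply HS; lia).
    rewrite <- msum_Xset; [| now apply rsum_nonneg | apply HS; lia].
    apply msum_ext; [now apply IH | reflexivity].
Qed.

End FeasibleSet.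

(* Indices are shifted: S_1..S_{n_d} are S 0 .. S (nd-1). *)
Theorem corollary1 (nd : nat) (S : nat -> R) (Pbar0 theta0 : R) :
  (1 <= nd)%nat ->
  (forall i, (i < nd)%nat -> 0 < S i) ->
  0 <= Pbar0 ->
  0 <= theta0 < PI / 2 ->
  forall z : R * R,
    bigmsum nd (fun i => Xset (S i) Pbar0 theta0) z <->
    Xset (rsum nd S) Pbar0 theta0 z.
Proof.
  (* The identity holds for every n_d and every angle. *)
  intros _ HS HPb _.
  apply bigmsum_Xset; [assumption |].
  intros i Hi; apply Rlt_le, HS, Hi.
Qed.
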